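(* Let $u,v\in X_0^+(2r)$, $d:=\min\{d(u),d(v)\}$, $\hat u:=u+d\cdot e$, $\hat v:=v+d\cdot e$, where $e=(0,\dots,0,1,\dots,1)\in\mathbb Z^{2r}$ has zeros in the first $r$ and ones in the last $r$ components. Then $(u,v)$ satisfies (4.2) if and only if $d(\hat u)=0$ (for even $r$), respectively $d(\hat v)=0$ (for odd $r$), and $$\theta_i'(\hat v)\prec\theta_i(\hat u)\quad\text{for } i=1,2.$$
   Context: $X^+(N):=\{x\in\mathbb Z^N:x_1\ge\dots\ge x_N\}$, $X_0^+(N):=\{x\in X^+(N):x_i+x_{N+1-i}\text{ independent of } i\}$. For $y\in X_0^+(2r)$ the defect is $d(y):=y_r-y_{r+1}$, and $X_{sp}(2r):=\{y\in X_0^+(2r):d(y)=0\}$. A pair $(u,v)$ with $u,v\in X_0^+(2r)$ satisfies (4.2) if $u_{2\rho-1}\ge v_{2\rho-1}\ge v_{2\rho}\ge u_{2\rho}$ for $\rho=1,\dots,r$. For $\beta\in\mathbb Z^r$, $\alpha\in\mathbb Z^{r+1}$, write $\beta\prec\alpha$ if $\alpha_\rho\ge\beta_\rho\ge\alpha_{\rho+1}$ for $\rho=1,\dots,r$. Splitting maps: for even $r$, $y\in X_{sp}(2r)$, $z\in X_0^+(2r)$: $\theta_1(y):=(y_1,y_2,y_4,\dots,y_r,y_{r+3},y_{r+5},\dots,y_{2r-1},y_{2r})$, $\theta_2(y):=(y_1,y_3,\dots,y_{r-1},y_{r+1},y_{r+2},y_{r+4},\dots,y_{2r})$, $\theta_1'(z):=(z_2,z_4,\dots,z_r,z_{r+1},z_{r+3},\dots,z_{2r-1})$,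 $\theta_2'(z):=(z_1,z_3,\dots,z_{r-1},z_{r+2},z_{r+4},\dots,z_{2r})$. For odd $r$, $z\in X_0^+(2r)$, $y\in X_{sp}(2r)$: $\theta_1(z):=(z_1,z_2,z_4,\dots,z_{r-1},z_{r+2},z_{r+4},\dots,z_{2r-1},z_{2r})$, $\theta_2(z):=(z_1,z_3,\dots,z_r,z_{r+1},z_{r+3},\dots,z_{2r})$, $\theta_1'(y):=(y_2,y_4,\dots,y_{r+1},y_{r+2},y_{r+4},\dots,y_{2r-1})$, $\theta_2'(y):=(y_1,y_3,\dots,y_r,y_{r+3},y_{r+5},\dots,y_{2r})$. For $r=1$: $\theta_i(z)=z$, $\theta_i'(y)=y_1$. (So for even $r$, $\theta$ is applied only to weights of defect $0$; for odd $r$, $\theta'$ only to weights of defect $0$.) *)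

(* Weights are integer sequences; entries are 1-based:
   y_i := nth 0 y (i-1). *)
From HB Require Import structures.
From mathcomp Require Import all_boot all_order all_algebra.
Set Implicit Arguments. Unset Strict Implicit. Unset Printing Implicit Defensive.
Import Order.TTheory GRing.Theory Num.Theory.
Local Open Scope ring_scope.

Definition ent (y : seq int) (i : nat) : int := nth 0 y i.-1.

Definition inXplus (N : nat) (x : seq int) : Prop :=
  size x = N /\ forall i j : nat, (1 <= i)%N -> (i <= j)%N -> (j <= N)%N ->
    ent x j <= ent x i.

Definition inX0plus (N : nat) (x : seq int) : Prop :=
  inXplus N x /\ exists c : int, forall i : nat, (1 <= i <= N)%N ->
    ent x i + ent x (N.+1 - i) = c.

Definition defect (r : nat) (y : seq int) : int := ent y r - ent y r.+1.

Definition evec (r : nat) : seq int := nseq r 0 ++ nseq r 1.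

Definition shiftE (r : nat) (d : int) (y : seq int) : seq int :=
  [seq p.1 + d * p.2 | p <- zip y (evec r)].

Definition cond42 (r : nat) (u v : seq int) : Prop :=
  forall rho : nat, (1 <= rho <= r)%N ->
    [/\ ent v rho.*2.-1 <= ent u rho.*2.-1,
        ent v rho.*2 <= ent v rho.*2.-1 &
        ent u rho.*2 <= ent v rho.*2].

Definition prec (beta alpha : seq int) : Prop :=
  size alpha = (size beta).+1 /\
  forall rho : nat, (1 <= rho <= size beta)%N ->
    ent alpha rho.+1 <= ent beta rho /\ ent beta rho <= ent alpha rho.

Definition step2 (a n : nat) : seq nat := mkseq (fun k => (a + 2 * k)%N) n.

Definition theta1_idx (r : nat) : seq nat :=
  let m := r./2 in
  if ~~ odd r then
    [:: 1%N] ++ step2 2 m ++ step2 (r + 3) m.-1 ++ [:: (2 * r)%N]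
  else
    [:: 1%N] ++ step2 2 m ++ step2 (r + 2) m ++ [:: (2 * r)%N].

Definition theta2_idx (r : nat) : seq nat :=
  let m := r./2 in
  if ~~ odd r then
    step2 1 m ++ [:: r.+1] ++ step2 (r + 2) m
  else
    step2 1 m.+1 ++ step2 (r + 1) m.+1.

Definition theta1'_idx (r : nat) : seq nat :=
  let m := r./2 in
  if ~~ odd r then
    step2 2 m ++ step2 (r + 1) m
  else if r == 1%N then [:: 1%N]
  else step2 2 m.+1 ++ step2 (r + 2) m.

Definition theta2'_idx (r : nat) : seq nat :=
  let m := r./2 in
  if ~~ odd r then
    step2 1 m ++ step2 (r + 2) m
  else
    step2 1 m.+1 ++ step2 (r + 3) m.

Definition theta1 (r : nat) (y : seq int) : seq int := map (ent y) (theta1_idx r).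
Definition theta2 (r : nat) (y : seq int) : seq int := map (ent y) (theta2_idx r).
Definition theta1' (r : nat) (y : seq int) : seq int := map (ent y) (theta1'_idx r).
Definition theta2' (r : nat) (y : seq int) : seq int := map (ent y) (theta2'_idx r).

(* Condition (4.2) says that v interlaces u: v_(2k+1) <= u_(2k+1) and
   u_(2k+2) <= v_(2k+2).  Adding d e to both vectors preserves this and keeps
   them nonincreasing, while making the smaller of the two middle defects zero.
   Every inequality in theta_i'(vh) ≺ theta_i(uh) compares vh_b with uh_a for
   indices a, b whose order and parity make it a consequence of interlacing and
   monotonicity.  Conversely, each interlacing inequality appears among them
   literally, except at the middle index r, where d(uh) = 0 (r even) or
   d(vh) = 0 (r odd) is exactly what is needed.  At that index interlacing
   also gives d(uh) <= d(vh) for r even and d(vh) <= d(uh) for r odd, so the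
   defect that vanishes is the one named in the statement. *)

From HB Require Import structures.
From mathcomp Require Import all_boot all_order all_algebra zify.
Import Order.TTheory GRing.Theory Num.Theory.

Lemma size_step2 a n : size (step2 a n) = n.
Proof. exact: size_mkseq. Qed.

Lemma nth_step2_cat a n s k :
  nth 0 (step2 a n ++ s) k = if (k < n)%N then (a + 2 * k)%N else nth 0 s (k - n).
Proof. by rewrite nth_cat size_step2; case: ifP => // hk; rewrite nth_mkseq. Qed.

Lemma nth_step2 a n k :
  nth 0 (step2 a n) k = if (k < n)%N then (a + 2 * k)%N else 0%N.
Proof. by case: ltnP => hk; [rewrite nth_mkseq | rewrite nth_default ?size_step2]. Qed.

Opaque step2.

Lemma even_or_odd r : exists m, r = m.*2 \/ r = m.*2.+1.
Proof.
by exists r./2; rewrite -{1 3}[r]odd_double_half; case: odd; [right|left].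
Qed.

Lemma nth0_cons (x : nat) s k :
  nth 0 (x :: s) k = if k == 0%N then x else nth 0 s k.-1.
Proof. by case: k. Qed.

Ltac split_parity r :=
  let m := fresh "m" in
  have [m [E|E]] := even_or_odd r; subst r;
  rewrite ?oddS ?odd_double ?doubleK /= ?uphalf_double.

Ltac solve_nth_idx :=
  repeat first [rewrite nth_step2_cat | rewrite nth_step2
               | rewrite nth0_cons | rewrite nth_nil];
  repeat case: ifP; lia.

Lemma nth_theta1_idx r k : (0 < r)%N -> (k <= r)%N ->
  nth 0 (theta1_idx r) k =
    if k == 0%N then 1%N else if (k.*2 <= r)%N then k.*2
    else if (k < r)%N then k.*2.+1 else r.*2.
Proof.
move=> hr hk; rewrite /theta1_idx; split_parity r; case: k hk => [|k] hk //=;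
  solve_nth_idx.
Qed.

Lemma nth_theta2_idx r k : (0 < r)%N -> (k <= r)%N ->
  nth 0 (theta2_idx r) k = if (k.*2 <= r)%N then k.*2.+1 else k.*2.
Proof. by move=> hr hk; rewrite /theta2_idx; split_parity r; solve_nth_idx. Qed.

Lemma nth_theta1'_idx r k : (k < r)%N ->
  nth 0 (theta1'_idx r) k =
    if r == 1%N then 1%N else if (k.*2 < r)%N then k.*2.+2 else k.*2.+1.
Proof.
move=> hk; rewrite /theta1'_idx; split_parity r; first by solve_nth_idx.
by case: eqP => [E|_]; [case: k hk => // k; lia | solve_nth_idx].
Qed.

Lemma nth_theta2'_idx r k : (k < r)%N ->
  nth 0 (theta2'_idx r) k = if (k.*2 < r)%N then k.*2.+1 else k.*2.+2.
Proof. by move=> hk; rewrite /theta2'_idx; split_parity r; solve_nth_idx. Qed.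

Lemma size_theta_idx r : (0 < r)%N ->
  [/\ size (theta1_idx r) = r.+1, size (theta2_idx r) = r.+1,
      size (theta1'_idx r) = r & size (theta2'_idx r) = r].
Proof.
move=> hr; rewrite /theta1_idx /theta2_idx /theta1'_idx /theta2'_idx.
split_parity r; [|case: eqP => [E|_]];
  rewrite ?size_cat /= ?size_cat ?size_step2; split; lia.
Qed.

Local Open Scope ring_scope.

Definition nonincreasing_upto (n : nat) (U : nat -> int) : Prop :=
  forall i j : nat, (1 <= i)%N -> (i <= j)%N -> (j <= n)%N -> U j <= U i.

Definition interlaced (r : nat) (U V : nat -> int) : Prop :=
  forall k : nat, (k < r)%N -> V k.*2.+1 <= U k.*2.+1 /\ U k.*2.+2 <= V k.*2.+2.

Lemma prec_mapP (U V : nat -> int) (a b : seq nat) : size a = (size b).+1 ->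
  prec (map V b) (map U a) <->
  forall k, (k < size b)%N ->
    U (nth 0%N a k.+1) <= V (nth 0%N b k) /\ V (nth 0%N b k) <= U (nth 0%N a k).
Proof.
move=> hab; rewrite /prec /ent !size_map hab; split=> [[_ H] k hk | H].
  by have := H k.+1; rewrite !(nth_map 0%N) ?hab; try lia; apply.
split=> // rho hrho; have := H rho.-1; rewrite !(nth_map 0%N) ?hab; try lia.
by rewrite prednK; try lia; apply; lia.
Qed.

Section Interlacing.
Variables (r : nat) (U V : nat -> int).
Hypothesis r_gt0 : (0 < r)%N.

Section Forward.
Hypotheses (U_noninc : nonincreasing_upto (2 * r) U)
  (V_noninc : nonincreasing_upto (2 * r) V) (UV_interlaced : interlaced r U V).

Lemma interlaced_V_le_U a b : (1 <= a)%N -> (a <= b)%N -> (b <= 2 * r)%N ->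
  (a < b)%N || odd b -> V b <= U a.
Proof.
move=> a1 ab b2r; have [k [|] Eb] := even_or_odd b; subst b.
- rewrite odd_double orbF => ltab; have /UV_interlaced[hV _] : (k.-1 < r)%N by lia.
  apply: le_trans (V_noninc _ _ _ _ _) (le_trans hV (U_noninc _ _ _ _ _)); lia.
- move=> _; have /UV_interlaced[hV _] : (k < r)%N by lia.
  by apply: le_trans hV (U_noninc _ _ _ _ _); lia.
Qed.

Lemma interlaced_U_le_V a b : (1 <= b)%N -> (b <= a)%N -> (a <= 2 * r)%N ->
  (b < a)%N || ~~ odd b -> U a <= V b.
Proof.
move=> b1 ba a2r; have [k [|] Eb] := even_or_odd b; subst b.
- move=> _; have /UV_interlaced[_ hU] : (k.-1 < r)%N by lia.
  have -> : k.*2 = k.-1.*2.+2 by lia.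
  by apply: le_trans (U_noninc _ _ _ _ _) hU; lia.
- rewrite oddS odd_double orbF => ltba; have /UV_interlaced[_ hU] : (k < r)%N by lia.
  apply: le_trans (U_noninc _ _ _ _ _) (le_trans hU (V_noninc _ _ _ _ _)); lia.
Qed.

Lemma interlaced_prec_theta1 :
  prec (map V (theta1'_idx r)) (map U (theta1_idx r)).
Proof.
have [s1 _ s1' _] := size_theta_idx r r_gt0.
apply/prec_mapP; rewrite ?s1 ?s1' // => k hk.
rewrite !nth_theta1_idx ?nth_theta1'_idx; try lia.
repeat case: ifP => ?;
  (split; [apply: interlaced_U_le_V | apply: interlaced_V_le_U]); lia.
Qed.

Lemma interlaced_prec_theta2 :
  prec (map V (theta2'_idx r)) (map U (theta2_idx r)).
Proof.
have [_ s2 _ s2'] := size_theta_idx r r_gt0.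
apply/prec_mapP; rewrite ?s2 ?s2' // => k hk.
rewrite !nth_theta2_idx ?nth_theta2'_idx; try lia.
repeat case: ifP => ?;
  (split; [apply: interlaced_U_le_V | apply: interlaced_V_le_U]); lia.
Qed.

Lemma interlaced_defect_le :
  if odd r then V r - V r.+1 <= U r - U r.+1 else U r - U r.+1 <= V r - V r.+1.
Proof.
case: ifP => odd_r.
- have hVU : V r <= U r by apply: interlaced_V_le_U; lia.
  have hUV : U r.+1 <= V r.+1 by apply: interlaced_U_le_V; lia.
  lia.
- have hUV : U r <= V r by apply: interlaced_U_le_V; lia.
  have hVU : V r.+1 <= U r.+1 by apply: interlaced_V_le_U; lia.
  lia.
Qed.
End Forward.

Lemma prec_theta_interlaced :
  (~~ odd r -> U r = U r.+1) -> (odd r -> V r = V r.+1) ->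
  prec (map V (theta1'_idx r)) (map U (theta1_idx r)) ->
  prec (map V (theta2'_idx r)) (map U (theta2_idx r)) -> interlaced r U V.
Proof.
have [s1 s2 s1' s2'] := size_theta_idx r r_gt0.
move=> U_mid V_mid /prec_mapP-/(_ ltac:(by rewrite s1 s1')) P1.
move=> /prec_mapP-/(_ ltac:(by rewrite s2 s2')) P2 k hk.
move: (P1 k) (P2 k); rewrite s1' s2' !nth_theta1_idx ?nth_theta1'_idx
  ?nth_theta2_idx ?nth_theta2'_idx; try lia.
move=> /(_ hk) + /(_ hk); rewrite !doubleS.
have [E|[E|E]] : r = k.*2 \/ r = k.*2.+1 \/ (r != k.*2) && (r != k.*2.+1) by lia.
- subst r; have {}U_mid : U k.*2 = U k.*2.+1 by rewrite U_mid ?odd_double.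
  by repeat case: ifP => ?; lia.
- subst r; have {}V_mid : V k.*2.+1 = V k.*2.+2 by rewrite V_mid ?oddS ?odd_double.
  by repeat case: ifP => ?; lia.
- by repeat case: ifP => ?; lia.
Qed.

End Interlacing.

Lemma ent_shiftE r d (y : seq int) i : size y = (2 * r)%N -> (1 <= i <= 2 * r)%N ->
  ent (shiftE r d y) i = ent y i + (if (r < i)%N then d else 0).
Proof.
move=> sy hi; rewrite /ent /shiftE (nth_map (0, 0)); last first.
  by rewrite size_zip size_cat !size_nseq sy; lia.
rewrite nth_zip /=; last by rewrite size_cat !size_nseq sy; lia.
rewrite /evec nth_cat size_nseq.
case: ltnP => hir; rewrite nth_nseq.
  by rewrite if_same mulr0 ifF //; lia.
by rewrite !ifT ?mulr1 //; lia.
Qed.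

Lemma defect_shiftE r d (y : seq int) : (0 < r)%N -> size y = (2 * r)%N ->
  defect r (shiftE r d y) = defect r y - d.
Proof. by move=> hr sy; rewrite /defect !ent_shiftE ?ltnn ?ltnSn //; lia. Qed.

Lemma shiftE_nonincreasing r d (y : seq int) : inXplus (2 * r) y -> d <= defect r y ->
  nonincreasing_upto (2 * r) (ent (shiftE r d y)).
Proof.
rewrite /defect => -[sy y_noninc] hd i j hi hij hj.
rewrite !ent_shiftE //; try lia.
have := y_noninc i j hi hij hj.
case: ifP => hri; case: ifP => hrj; try lia.
have := y_noninc i r hi; have := y_noninc r.+1 j; lia.
Qed.

Lemma interlaced_shiftE r d (u v : seq int) :
  size u = (2 * r)%N -> size v = (2 * r)%N ->
  interlaced r (ent (shiftE r d u)) (ent (shiftE r d v)) <-> interlaced r (ent u) (ent v).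
Proof.
move=> su sv; split=> H k hk; have := H k hk;
  rewrite !ent_shiftE //; try lia; case: ifP; case: ifP; lia.
Qed.

Lemma cond42_interlaced r (u v : seq int) : nonincreasing_upto (2 * r) (ent v) ->
  cond42 r u v <-> interlaced r (ent u) (ent v).
Proof.
move=> v_noninc; split=> [H k hk | H rho hrho].
  by have [] := H k.+1 ltac:(lia); rewrite doubleS.
have [] := H rho.-1 ltac:(lia).
have -> : rho.-1.*2.+2 = rho.*2 by lia.
have -> : rho.-1.*2.+1 = rho.*2.-1 by lia.
by split=> //; apply: v_noninc; lia.
Qed.

Lemma shiftE_min_defect r d (u v : seq int) : (0 < r)%N ->
  size u = (2 * r)%N -> size v = (2 * r)%N -> d = Num.min (defect r u) (defect r v) ->
  [/\ 0 <= defect r (shiftE r d u), 0 <= defect r (shiftE r d v)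
    & defect r (shiftE r d u) = 0 \/ defect r (shiftE r d v) = 0].
Proof.
move=> hr su sv ->; rewrite !defect_shiftE // !subr_ge0 ge_min lexx ge_min lexx orbT.
by split=> //; case: leP => _; [left | right]; rewrite subrr.
Qed.

Theorem corollary4p2 (r : nat) (hr : (1 <= r)%N) (u v : seq int) :
  inX0plus (2 * r) u -> inX0plus (2 * r) v ->
  let d := Num.min (defect r u) (defect r v) in
  let uh := shiftE r d u in
  let vh := shiftE r d v in
  cond42 r u v <->
  [/\ (if odd r then defect r vh = 0 else defect r uh = 0),
      prec (theta1' r vh) (theta1 r uh) &
      prec (theta2' r vh) (theta2 r uh)].
Proof.
move=> [u_dom _] [v_dom _] d uh vh.
have [[su _] [sv _]] := (u_dom, v_dom).
have uh_noninc : nonincreasing_upto (2 * r) (ent uh).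
  by apply: shiftE_nonincreasing; rewrite // ge_min lexx.
have vh_noninc : nonincreasing_upto (2 * r) (ent vh).
  by apply: shiftE_nonincreasing; rewrite // ge_min lexx orbT.
have [uh_defect vh_defect uh_or_vh] := shiftE_min_defect r d u v hr su sv (erefl d).
rewrite -/uh -/vh in uh_defect vh_defect uh_or_vh.
rewrite (cond42_interlaced r u v v_dom.2) -(interlaced_shiftE r d u v su sv) -/uh -/vh.
split=> [uv_interlaced | [defect0 prec1 prec2]].
  split; [| exact: interlaced_prec_theta1 | exact: interlaced_prec_theta2].
  have := interlaced_defect_le r _ _ hr uh_noninc vh_noninc uv_interlaced.
  by move: uh_defect vh_defect uh_or_vh; rewrite /defect; case: odd; lia.
apply: prec_theta_interlaced => // r_par; move: defect0;
  by rewrite /defect ?r_par ?(negbTE r_par); lia.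
Qed.
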